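(* Let $n$ be a positive integer and let $G$ be a finite simple graph which is gap-free and $n$-claw-free. Then $\operatorname{reg}(I(G))\leq n$. *)

From HB Require Import structures.
From mathcomp Require Import all_boot all_order all_algebra.
Set Implicit Arguments. Unset Strict Implicit. Unset Printing Implicit Defensive.
Import Order.TTheory GRing.Theory Num.Theory.
Local Open Scope ring_scope.

(* A finite simple graph on the finite vertex type V is a symmetric,
   irreflexive relation e : rel V.  The polynomial ring is
   S = k[x_v : v in V] and I(G) = (x_a x_b : e a b) is the edge ideal. *)

Section EdgeIdeal.
Variables (k : fieldType) (V : finType) (e : rel V).

Definition gap_free : Prop :=
  forall a b c d : V, e a b -> e c d ->
    a != c -> a != d -> b != c -> b != d ->
    [|| e a c, e a d, e b c | e b d].

Definition claw_free (n : nat) : Prop :=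
  ~ exists (v : V) (W : {set V}),
      [/\ #|W| = n, {in W, forall w, e v w} &
          {in W &, forall w w', ~~ e w w'}].

(* Monomials of S with exponents bounded by j (enough for degree <= j). *)
Definition mdeg (j : nat) (u : {ffun V -> 'I_j.+1}) : nat := (\sum_v (u v : nat))%N.

(* u is a standard monomial for I(G), i.e. u \notin I(G). *)
Definition std_mon (j : nat) (u : {ffun V -> 'I_j.+1}) : bool :=
  [forall a, forall b, ~~ [&& e a b, (0 < u a)%N & (0 < u b)%N]].

(* The degree-j strand of the Koszul complex K(x_v : v in V) (x) S/I(G):
   its i-th group (K_i (x) S/I)_j has basis the pairs (F, u) with F a set
   of i variables (wedge e_F) and u a standard monomial of degree j - i. *)
Definition kbasis (j i : nat) (p : {set V} * {ffun V -> 'I_j.+1}) : bool :=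
  [&& #|p.1| == i, (#|p.1| + mdeg p.2 == j)%N & std_mon p.2].

(* Koszul differential d(u e_F) = sum_{l in F} (-1)^{pos(l,F)} x_l u e_{F\l},
   the term vanishing in S/I when x_l u lies in I(G).
   kcoef j i p q = coefficient of basis element q in d(p), for p in degree i. *)
Definition kcoef (j i : nat) (p q : {set V} * {ffun V -> 'I_j.+1}) : k :=
  if @kbasis j i p && std_mon q.2 then
    match [pick l in p.1 | (q.1 == p.1 :\ l)
             && ((q.2 l : nat) == (p.2 l).+1)
             && [forall v, (v != l) ==> ((q.2 v : nat) == p.2 v)]] with
    | Some l => (-1) ^+ #|[set v in p.1 | (enum_rank v < enum_rank l)%N]|
    | None => 0
    end
  else 0.

(* Matrix of d_i (rows = sources, zero rows outside the degree-i basis). *)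
Definition kmx (j i : nat) :
  'M[k]_(#|{: {set V} * {ffun V -> 'I_j.+1}}|) :=
  \matrix_(r, c) @kcoef j i (enum_val r) (enum_val c).

(* graded Betti number beta_{i,j}(S/I(G)) = dim_k Tor_i^S(S/I(G), k)_j,
   computed as dim H_i of the degree-j strand of K(x) (x) S/I(G). *)
Definition betti_quot (i j : nat) : nat :=
  (#|[pred p | @kbasis j i p]| - \rank (kmx j i) - \rank (kmx j i.+1))%N.

(* reg(I(G)) = max { j - i : beta_{i,j}(I(G)) <> 0 }, and
   beta_{i,j}(I) = beta_{i+1,j}(S/I).  Hence reg(I(G)) <= n iff
   for all i >= 1, beta_{i,j}(S/I) <> 0 implies j - (i - 1) <= n. *)
Definition reg_edge_ideal_le (n : nat) : Prop :=
  forall i j : nat, (0 < i)%N -> betti_quot i j <> 0%N -> (j + 1 <= n + i)%N.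

End EdgeIdeal.

From HB Require Import structures.
From mathcomp Require Import all_boot all_order all_algebra.
From mathcomp Require Import zify ring.
Set Implicit Arguments. Unset Strict Implicit. Unset Printing Implicit Defensive.
Import GRing.Theory.
Local Open Scope ring_scope.

(* The Koszul complex of S/I(G) splits into strands indexed by multidegrees a.
   When some exponent of a is at least 2 the strand is a cone, hence exact.
   For squarefree a with support S it is, up to signs, the cochain complex of
   the independence complex of G on S, and beta_{i,|S|}(S/I(G)) is its
   cohomology in degree t = |S| - i.  This vanishes for t >= n by induction on
   S, splitting at a vertex w with a neighbour u: the deletion of w is handled
   by induction, and on the link of w (the vertices of S outside N[w]) the
   neighbourhood of u is a vertex cover, by gap-freeness, whose independent
   subsets have at most n - 2 elements, by n-claw-freeness at u.  A complex
   with such a vertex cover is acyclic above n - 2, by the same deletion/link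
   induction along the cover. *)

Lemma sumr_neq0_exists (I : finType) (R : nmodType) (P : pred I) (f : I -> R) :
  \sum_(i | P i) f i != 0 -> exists2 i, P i & f i != 0.
Proof.
move=> H; apply/exists_inP; apply: contraNT H; rewrite negb_exists_in => /forall_inP H.
by rewrite big1 // => i /H /negPn /eqP.
Qed.

(* Splitting along [enum_rank] avoids dividing by 2, so this holds in characteristic 2. *)
Lemma sumr_antisym (I : finType) (R : zmodType) (D : {set I}) (T : I -> I -> R) :
  (forall i, T i i = 0) -> {in D &, forall i j, T i j = - T j i} ->
  \sum_(i in D) \sum_(j in D) T i j = 0.
Proof.
move=> T0 Ta.
pose below (i j : I) := (enum_rank i < enum_rank j)%N.
have split_ij i j : T i j = (if below i j then T i j else 0) + (if below j i then T i j else 0).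
  rewrite /below; case: (ltngtP (enum_rank i) (enum_rank j)) => H; rewrite ?addr0 ?add0r //.
  by move/val_inj/enum_rank_inj: H => ->; rewrite T0.
under eq_bigr => i _ do under eq_bigr => j _ do rewrite split_ij.
under eq_bigr => i _ do rewrite big_split /=.
rewrite big_split /= [X in _ + X]exchange_big /= -big_split /= big1 // => i iD.
rewrite -big_split /= big1 // => j jD.
by case: ifP => _; rewrite ?addr0 // (Ta j i) // subrr.
Qed.

Lemma exists_subset_card (T : finType) (X : {set T}) c :
  (c <= #|X|)%N -> exists2 Y : {set T}, Y \subset X & #|Y| = c.
Proof.
elim: c => [|c IH] H; first by exists set0; rewrite ?sub0set ?cards0.
have [Y YX cY] := IH (ltnW H).
have : (0 < #|X :\: Y|)%N by rewrite cardsDS // cY subn_gt0.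
rewrite card_gt0 => /set0Pn [x]; rewrite inE => /andP[xY xX].
exists (x |: Y); first by rewrite subUset sub1set xX.
by rewrite cardsU1 xY cY.
Qed.

Lemma setDD1 (T : finType) (S G : {set T}) w : w \in S -> S :\: (G :\ w) = w |: (S :\: G).
Proof. by move=> wS; apply/setP=> x; rewrite !inE; case: eqP => // ->; rewrite wS. Qed.

Lemma setU1D1 (T : finType) (G : {set T}) l w : l != w -> (l |: G) :\ w = l |: (G :\ w).
Proof.
move=> lw; apply/setP=> x; rewrite !inE.
by case: (x =P w) => [->|_] /=; [rewrite eq_sym (negbTE lw) | case: (x == l)].
Qed.

Lemma setD1D1 (T : finType) (S X : {set T}) w : w \in X -> (S :\ w) :\: (X :\ w) = S :\: X.
Proof. by move=> wX; apply/setP=> x; rewrite !inE; case: (x =P w) => [->|_]; rewrite ?wX. Qed.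

Lemma setD1D (T : finType) (S F : {set T}) w : w \notin F -> (S :\ w) :\: F = S :\: (w |: F).
Proof.
by move=> wF; apply/setP=> x; rewrite !inE; case: (x =P w) => [->|_]; rewrite ?(negbTE wF).
Qed.

Lemma setU1D (T : finType) (S F : {set T}) l : l \in S -> l \notin F ->
  S :\: (l |: F) = (S :\: F) :\ l.
Proof. by move=> lS lF; apply/setP=> x; rewrite !inE; case: (x == l); case: (x \in F). Qed.

Section IndependenceComplex.
Variables (k : fieldType) (V : finType) (e : rel V).
Hypotheses (eS : symmetric e) (eirr : irreflexive e).
Implicit Types (S R F G A X L N : {set V}) (l m w : V) (t : nat).

Definition indep X := [forall x in X, forall y in X, ~~ e x y].

Lemma indepP X : reflect {in X &, forall x y, ~~ e x y} (indep X).
Proof.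
apply: (iffP forall_inP) => [H x y xX yX | H x xX].
  by move/forall_inP: (H x xX); apply.
by apply/forall_inP => y yX; apply: H.
Qed.

Lemma indepS A X : A \subset X -> indep X -> indep A.
Proof. by move=> /subsetP sAX /indepP H; apply/indepP => x y xA yA; apply: H; apply: sAX. Qed.

Lemma indepU1 X w : indep X -> {in X, forall x, ~~ e w x} -> indep (w |: X).
Proof.
move=> /indepP iX H; apply/indepP => x y; rewrite !inE.
case/predU1P=> [->|xX]; case/predU1P=> [->|yX].
- by rewrite eirr.
- exact: H.
- by rewrite eS; exact: H.
- exact: iX.
Qed.

(* The strand of the Koszul complex of S/I(G) in a multidegree with support S
   and with R the set of variables of exponent at least 2: a chain is a
   coefficient function on the sets F \subset S (the wedge part), and the basis
   element of F is nonzero in S/I(G) iff (S :\: F) :|: R is independent.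
   [kdiff] is the transpose of the Koszul differential, with sign function
   [s]; its homogeneous pieces are graded by t = #|S :\: F|. *)
Definition admissible S R F := (F \subset S) && indep ((S :\: F) :|: R).

Definition kdiff S R (s : V -> {set V} -> k) (z : {set V} -> k) G : k :=
  if admissible S R G then \sum_(l in S :\: G) s l (l |: G) * z (l |: G) else 0.

Definition sign_sq (s : V -> {set V} -> k) := forall l F, s l F * s l F = 1.

Definition sign_anti S (s : V -> {set V} -> k) := forall l m F, F \subset S ->
  l \in F -> m \in F -> l != m -> s l F * s m (F :\ l) = - (s m F * s l (F :\ m)).

Definition homog S R t (z : {set V} -> k) :=
  forall F, z F != 0 -> admissible S R F /\ #|S :\: F| = t.

Definition homog_below S t (y : {set V} -> k) :=
  forall F, y F != 0 -> F \subset S /\ (#|S :\: F|).+1 = t.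

Definition acyclic_at S R s t := forall z, homog S R t z -> (forall G, kdiff S R s z G = 0) ->
  exists2 y, homog_below S t y & forall G, kdiff S R s y G = z G.

Lemma admissible0 S F : admissible S set0 F = (F \subset S) && indep (S :\: F).
Proof. by rewrite /admissible setU0. Qed.

Lemma admissibleU1 S R G l : admissible S R G -> l \in S -> admissible S R (l |: G).
Proof.
case/andP=> GS iG lS; apply/andP; split; first by rewrite subUset sub1set lS.
apply: indepS iG; apply/subsetP => x; rewrite !inE.
by case: (x \in R); rewrite ?orbT // !orbF => /andP[/norP[_ ->] ->].
Qed.

Lemma homog_eq0 S R t z F : homog S R t z -> ~~ admissible S R F -> z F = 0.
Proof. by move=> H vF; apply/eqP; apply: contraNT vF => /H []. Qed.

Lemma kdiffD S R s y1 y2 G :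
  kdiff S R s (fun F => y1 F + y2 F) G = kdiff S R s y1 G + kdiff S R s y2 G.
Proof.
rewrite /kdiff; case: ifP => _; last by rewrite addr0.
by rewrite -big_split /=; apply: eq_bigr => l _; rewrite mulrDr.
Qed.

Lemma kdiffB S R s y1 y2 G :
  kdiff S R s (fun F => y1 F - y2 F) G = kdiff S R s y1 G - kdiff S R s y2 G.
Proof.
rewrite /kdiff; case: ifP => _; last by rewrite subr0.
by rewrite -sumrB /=; apply: eq_bigr => l _; rewrite mulrBr.
Qed.

Lemma kdiff0 S R s G : kdiff S R s (fun _ => 0) G = 0.
Proof. by rewrite /kdiff; case: ifP => // _; rewrite big1 // => l _; rewrite mulr0. Qed.

Lemma kdiffK S R s y G : sign_anti S s -> kdiff S R s (kdiff S R s y) G = 0.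
Proof.
move=> As; rewrite {1}/kdiff; case: ifP => vG //.
have GS : G \subset S by case/andP: vG.
transitivity (\sum_(l in S :\: G) \sum_(m in S :\: G)
   (if l == m then 0 else s l (l |: G) * (s m (m |: (l |: G)) * y (m |: (l |: G))))).
  apply: eq_bigr => l; rewrite inE => /andP[lG lS].
  rewrite /kdiff admissibleU1 // mulr_sumr [in RHS](bigD1 l) /=; last by rewrite inE lG lS.
  rewrite eqxx add0r; apply: eq_big => m.
    by rewrite !inE; case: (m == l); case: (m \in G); case: (m \in S).
  by rewrite !inE => /andP[/norP[H _] _]; rewrite eq_sym (negbTE H).
apply: sumr_antisym => [l|l m]; first by rewrite eqxx.
rewrite !inE => /andP[lG lS] /andP[mG mS].
rewrite [m == l]eq_sym; case: eqP => [//|/eqP lm]; first by rewrite oppr0.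
set F := m |: (l |: G).
have FS : F \subset S by rewrite !subUset !sub1set lS mS GS.
have E1 : l |: (m |: G) = F by rewrite /F setUCA.
have E2 : F :\ m = l |: G by rewrite /F setU1K // !inE negb_or mG eq_sym lm.
have E3 : F :\ l = m |: G by rewrite -E1 setU1K // !inE negb_or lG lm.
have := As l m F FS; rewrite !inE !eqxx !orbT /= => /(_ isT isT lm).
rewrite E2 E3 E1 => H.
rewrite !mulrA [s m (m |: G) * s l F]mulrC H.
by rewrite mulNr opprK [s l (l |: G) * s m F]mulrC.
Qed.

Lemma kdiff_homog S R s y t G :
  homog_below S t y -> kdiff S R s y G != 0 -> admissible S R G /\ #|S :\: G| = t.
Proof.
move=> hy; rewrite /kdiff; case: ifP => vG; last by rewrite eqxx.
case/sumr_neq0_exists => l; rewrite inE => /andP[lG lS] H.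
have /hy[_ <-] : y (l |: G) != 0 by apply: contraNneq H => ->; rewrite mulr0.
by split=> //; rewrite setU1D // [in LHS](cardsD1 l) !inE lG lS.
Qed.

Lemma acyclic_gt_card S R s t : (#|S| < t)%N -> acyclic_at S R s t.
Proof.
move=> St z hz cz; exists (fun _ => 0) => [F|G]; first by rewrite eqxx.
rewrite kdiff0; apply/esym/eqP; apply: contraLR St => /hz[_ <-]; rewrite -leqNgt.
by rewrite subset_leq_card // subsetDl.
Qed.

(* A vertex w that is forced into every face (w \in R) or isolated in S makes
   the complex a cone with apex w; the contracting homotopy is z |-> s w F z (F :\ w). *)
Lemma acyclic_cone S R s t w : sign_sq s -> sign_anti S s -> R \subset S -> w \in S ->
  (w \in R \/ {in S, forall x, ~~ e w x}) -> acyclic_at S R s t.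
Proof.
move=> ss As RS wS Hw z hz cz.
have admD1 G : admissible S R G -> w \in G -> admissible S R (G :\ w).
  case/andP=> GS iG wG; apply/andP; split; first exact: subset_trans (subD1set _ _) GS.
  rewrite setDD1 // -setUA.
  case: Hw => [wR|wI].
    by rewrite (setUidPr (_ : [set w] \subset _)) // sub1set inE wR orbT.
  apply: indepU1 => // x; rewrite !inE => /orP[/andP[_ xS]|/(subsetP RS) xS]; exact: wI.
exists (fun F => if w \in F then s w F * z (F :\ w) else 0).
  move=> F; case: ifP => wF; last by rewrite eqxx.
  move=> H; have /hz[/andP[FS _] cF] : z (F :\ w) != 0.
    by apply: contraNneq H => ->; rewrite mulr0.
  split; first by rewrite -(setD1K wF) subUset sub1set wS.
  by rewrite -cF setDD1 // cardsU1 !inE wF.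
move=> G; rewrite {1}/kdiff; case: ifP => vG; last by rewrite (homog_eq0 hz) ?vG.
case: (boolP (w \in G)) => wG; last first.
  rewrite (bigD1 w) /=; last by rewrite !inE wG wS.
  rewrite !inE eqxx /= setU1K // mulrA ss mul1r big1 ?addr0 // => l /andP[_ lw].
  by rewrite !inE (negbTE wG) orbF eq_sym (negbTE lw) mulr0.
have := cz (G :\ w); rewrite /kdiff admD1 // setDD1 // big_setU1 /=; last by rewrite !inE wG.
rewrite setD1K // => /eqP; rewrite addr_eq0 => /eqP H.
transitivity (- s w G * \sum_(l in S :\: G) s l (l |: (G :\ w)) * z (l |: (G :\ w))); last first.
  by rewrite -[X in _ * X]opprK -H mulNr mulrN opprK mulrA ss mul1r.
rewrite mulr_sumr; apply: eq_bigr => l; rewrite inE => /andP[lG lS].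
have lw : l != w by apply: contraNneq lG => ->.
rewrite !inE wG orbT setU1D1 //.
set F := l |: G; set X := l |: (G :\ w).
have FS : F \subset S by rewrite subUset sub1set lS; case/andP: vG.
have := As l w F FS; rewrite !inE eqxx /= wG orbT => /(_ isT isT lw).
rewrite /F setU1K // setU1D1 // -/F -/X => H0.
have -> : s l F = s l F * (s w G * s w G) by rewrite ss mulr1.
rewrite [s l F * _]mulrA H0.
transitivity (- (s w F * s w F) * (s l X * s w G * z X)); first by ring.
by rewrite ss; ring.
Qed.

Lemma sign_anti_setU1 S s w : sign_anti S s -> w \in S ->
  sign_anti (S :\ w) (fun l F => s l (w |: F)).
Proof.
move=> As wS l m F FS lF mF lm /=.
have FS' : w |: F \subset S by rewrite subUset sub1set wS (subset_trans FS (subD1set _ _)).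
have wl : l != w by move: (subsetP FS l lF); rewrite !inE => /andP[].
have wm : m != w by move: (subsetP FS m mF); rewrite !inE => /andP[].
rewrite -!setU1D1 1?eq_sym //.
by apply: As => //; rewrite !inE ?lF ?mF ?orbT.
Qed.

Lemma sign_anti_setU S L s N : sign_anti S s -> L \subset S -> N \subset S ->
  [disjoint L & N] -> sign_anti L (fun l F => s l (F :|: N)).
Proof.
move=> As LS NS dLN l m F FL lF mF lm /=.
have FS : F :|: N \subset S by rewrite subUset NS andbT (subset_trans FL LS).
have notN x : x \in F -> x \notin N by move=> xF; rewrite (disjointFr dLN) // (subsetP FL).
have E x : x \in F -> (F :\ x) :|: N = (F :|: N) :\ x.
  move=> /notN xN; apply/setP=> y; rewrite !inE.
  by case: (y =P x) => [->|_] /=; rewrite ?(negbTE xN).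
by rewrite !E //; apply: As => //; rewrite inE ?lF ?mF.
Qed.

Lemma link_notin S w : w \notin S :\: (w |: [set x in S | e w x]).
Proof. by rewrite !inE eqxx. Qed.

Lemma link_nonadj S w : {in S :\: (w |: [set x in S | e w x]), forall x, ~~ e w x}.
Proof.
move=> x; rewrite !inE negb_or => /andP[/andP[_ /negP H] xS].
by apply/negP => ewx; apply: H; rewrite xS.
Qed.

Lemma sign_anti_link S s w : sign_anti S s ->
  sign_anti (S :\: (w |: [set x in S | e w x])) (fun l F => s l (F :|: [set x in S | e w x])).
Proof.
move=> As; apply: (sign_anti_setU As (subsetDl _ _)).
  by apply/subsetP => x; rewrite inE => /andP[].
by rewrite -setI_eq0; apply/eqP/setP => x; rewrite !inE; case: (x \in S); case: (e w x); rewrite ?orbT ?andbF.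
Qed.

Section DeletionLink.
Variables (S : {set V}) (s : V -> {set V} -> k) (w : V).
Hypotheses (As : sign_anti S s) (wS : w \in S).

Local Notation N := [set x in S | e w x].
Local Notation L := (S :\: (w |: N)).

Let wL := link_notin S w.

Let setD_link F : F \subset L -> S :\: (F :|: N) = w |: (L :\: F).
Proof.
move=> FL; apply/setP=> x; rewrite !inE.
case: (x =P w) => [->|_] /=.
  by rewrite wS eirr andbF /= (negbTE (contra (subsetP FL w) wL)).
by case: (x \in F); case: (x \in S); case: (e w x).
Qed.

Let link_sub F : F \subset L -> F :|: N \subset S.
Proof.
move=> FL; rewrite subUset (subset_trans FL (subsetDl _ _)) /=.
by apply/subsetP => x; rewrite inE => /andP[].
Qed.

Let nbhd_sub G : admissible S set0 G -> w \notin G -> N \subset G.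
Proof.
rewrite admissible0 => /andP[GS iG] wG.
apply/subsetP => x; rewrite inE => /andP[xS ewx]; apply: contraTT iG => xG.
apply/negP => /indepP /(_ w x); rewrite !inE wG wS xG xS => /(_ isT isT).
by rewrite ewx.
Qed.

Lemma cycle_deletion_boundary t z :
  acyclic_at (S :\ w) set0 (fun l F => s l (w |: F)) t ->
  homog S set0 t z -> (forall G, kdiff S set0 s z G = 0) ->
  exists2 y, homog_below S t y & forall F, w \in F -> kdiff S set0 s y F = z F.
Proof.
move=> Hdel hz cz.
pose z' F := if w \in F then 0 else z (w |: F).
have hz' : homog (S :\ w) set0 t z'.
  move=> F; rewrite /z'; case: ifP => wF; first by rewrite eqxx.
  move/hz => []; rewrite !admissible0 => /andP[FS iF] cF.
  rewrite setD1D ?wF //; split=> //; rewrite iF andbT.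
  apply/subsetP => x xF; rewrite !inE (subsetP FS) ?inE ?xF ?orbT // andbT.
  by apply: contraNneq (negbT wF) => <-.
have cz' G : kdiff (S :\ w) set0 (fun l F => s l (w |: F)) z' G = 0.
  rewrite /kdiff; case: ifP => // vG.
  move: vG; rewrite admissible0 => /andP[GS iG].
  have wG : w \notin G by apply/negP => /(subsetP GS); rewrite !inE eqxx.
  have vG' : admissible S set0 (w |: G).
    rewrite admissible0 -setD1D // iG andbT subUset sub1set wS /=.
    exact: subset_trans GS (subD1set _ _).
  apply: etrans (cz (w |: G)); rewrite /kdiff vG' -setD1D //.
  apply: eq_bigr => l; rewrite !inE => /andP[lG /andP[lw lS]].
  by rewrite /z' !inE eq_sym (negbTE lw) (negbTE wG) /= setUCA.
have [y' hy' dy'] := Hdel z' hz' cz'.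
exists (fun F => if w \in F then y' (F :\ w) else 0).
  move=> F; case: ifP => wF; last by rewrite eqxx.
  move/hy' => [FS <-]; rewrite setD1D1 //; split=> //.
  by rewrite -(setD1K wF) subUset sub1set wS (subset_trans FS (subD1set _ _)).
move=> F wF; case: (boolP (admissible S set0 F)) => vF; last first.
  by rewrite /kdiff (negbTE vF) (homog_eq0 hz vF).
have := dy' (F :\ w); rewrite /z' !inE eqxx /= setD1K // => <-.
rewrite /kdiff vF.
have -> : admissible (S :\ w) set0 (F :\ w).
  move: vF; rewrite !admissible0 setD1D1 // => /andP[FS ->]; rewrite andbT.
  by apply/subsetP => x; rewrite !inE => /andP[-> /(subsetP FS) ->].
rewrite setD1D1 //; apply: eq_bigr => l; rewrite !inE => /andP[lF lS].
have lw : l != w by apply: contraNneq lF => ->.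
by rewrite wF orbT setU1D1 // setUCA setD1K.
Qed.

Definition link_chain (r : {set V} -> k) F : k := if F \subset L then r (F :|: N) else 0.

Definition link_lift (y : {set V} -> k) F : k :=
  if (N \subset F) && (w \notin F) then y (F :\: N) else 0.

Lemma homog_link_chain t r : homog S set0 t r -> (forall F, w \in F -> r F = 0) ->
  homog L set0 t.-1 (link_chain r).
Proof.
move=> hr rw F; rewrite /link_chain; case: ifP => FL; last by rewrite eqxx.
move=> H; have wF : w \notin F :|: N by apply/negP => /rw /eqP; rewrite (negbTE H).
move/hr: H => []; rewrite admissible0 setD_link // => /andP[_ iF] cF.
rewrite admissible0 FL /=; split; first exact: indepS (subsetUr _ _) iF.
have wLF : w \notin L :\: F by rewrite inE (negbTE wL) andbF.
by rewrite -cF cardsU1 wLF.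
Qed.

Lemma kdiff_link_chain r : (forall G, kdiff S set0 s r G = 0) -> (forall F, w \in F -> r F = 0) ->
  forall G, kdiff L set0 (fun l F => s l (F :|: N)) (link_chain r) G = 0.
Proof.
move=> cr rw G; rewrite /kdiff; case: ifP => // vG.
move: vG; rewrite admissible0 => /andP[GL iG].
have vGN : admissible S set0 (G :|: N).
  rewrite admissible0 link_sub //= setD_link //; apply: indepU1 => // x.
  by rewrite inE => /andP[_]; exact: link_nonadj.
apply: etrans (cr (G :|: N)); rewrite /kdiff vGN (setD_link GL) big_setU1 /=; last first.
  by rewrite inE (negbTE wL) andbF.
rewrite rw ?mulr0 ?add0r; last by rewrite !inE eqxx.
apply: eq_bigr => l; rewrite inE => /andP[lG lL].
rewrite /link_chain setUA; suff -> : l |: G \subset L by [].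
by rewrite subUset sub1set lL GL.
Qed.

Lemma homog_below_link_lift t y : (0 < t)%N -> homog_below L t.-1 y ->
  homog_below S t (link_lift y).
Proof.
move=> t0 hy F; rewrite /link_lift; case: ifP => [/andP[NF wF]|]; last by rewrite eqxx.
move/hy => [FL cF].
have FE : F = (F :\: N) :|: N by rewrite -{1}(setID F N) (setIidPr NF) setUC.
rewrite FE link_sub //; split=> //.
by rewrite setD_link // cardsU1 inE (negbTE wL) andbF /= add1n cF prednK.
Qed.

Lemma kdiff_link_lift t r y : homog S set0 t r -> (forall F, w \in F -> r F = 0) ->
  (forall G, kdiff L set0 (fun l F => s l (F :|: N)) y G = link_chain r G) ->
  forall G, kdiff S set0 s (link_lift y) G = r G.
Proof.
move=> hr rw dy G; case: (boolP (admissible S set0 G)) => vG; last first.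
  by rewrite /kdiff (negbTE vG) (homog_eq0 hr vG).
case: (boolP (w \in G)) => wG.
  rewrite rw // /kdiff vG big1 // => l _.
  by rewrite /link_lift !inE wG orbT andbF mulr0.
have NG := nbhd_sub vG wG.
move: (vG); rewrite admissible0 => /andP[GS iG].
set G' := G :\: N.
have GE : G = G' :|: N by rewrite -{1}(setID G N) (setIidPr NG) setUC.
have G'L : G' \subset L.
  apply/subsetP => x; rewrite !inE => /andP[xN xG]; have xS := subsetP GS x xG.
  move: xN; rewrite xS /= => xN; rewrite negb_or xN andbT.
  by rewrite andbT; apply/eqP => xw; move: wG; rewrite -xw xG.
have := dy G'; rewrite /link_chain G'L -GE => <-.
have vG' : admissible L set0 G'.
  rewrite admissible0 G'L /=; move: iG; rewrite GE setD_link //; apply: indepS; exact: subsetUr.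
rewrite /kdiff vG' vG {1}GE setD_link // big_setU1 /=; last by rewrite inE (negbTE wL) andbF.
rewrite /link_lift !inE eqxx /= andbF mulr0 add0r.
apply: eq_bigr => l; rewrite inE => /andP[lG' lL].
have lN : l \notin N by apply/negP => lN; move: lL; rewrite in_setD in_setU1 lN orbT.
have lw : l != w by apply/eqP => lw; move: lL; rewrite lw (negbTE wL).
rewrite -setUA -GE subsetU ?NG ?orbT //= !inE (negbTE wG) orbF eq_sym (negbTE lw) /=.
congr (_ * y _); apply/setP=> x; rewrite in_setD !in_setU1 in_setD.
by case: (x =P l) => [->|_] /=; rewrite ?lN.
Qed.

Lemma cycle_link_boundary t r : (0 < t)%N ->
  acyclic_at L set0 (fun l F => s l (F :|: N)) t.-1 ->
  homog S set0 t r -> (forall G, kdiff S set0 s r G = 0) ->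
  (forall F, w \in F -> r F = 0) ->
  exists2 y, homog_below S t y & forall G, kdiff S set0 s y G = r G.
Proof.
move=> t0 Hlink hr cr rw.
have [y hy dy] := Hlink _ (homog_link_chain hr rw) (kdiff_link_chain cr rw).
by exists (link_lift y); [exact: homog_below_link_lift | exact: kdiff_link_lift hr rw dy].
Qed.

Lemma acyclic_split t : (0 < t)%N ->
  acyclic_at (S :\ w) set0 (fun l F => s l (w |: F)) t ->
  acyclic_at L set0 (fun l F => s l (F :|: N)) t.-1 ->
  acyclic_at S set0 s t.
Proof.
move=> t0 Hdel Hlink z hz cz.
have [y hy dy] := cycle_deletion_boundary Hdel hz cz.
pose r F := z F - kdiff S set0 s y F.
have hr : homog S set0 t r.
  move=> F rF; case: (boolP (z F == 0)) => zF; last exact: hz.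
  apply: (kdiff_homog (s := s) hy); apply: contraNneq rF => H.
  by rewrite /r H (eqP zF) subrr.
have cr G : kdiff S set0 s r G = 0 by rewrite /r kdiffB cz kdiffK // subrr.
have rw F : w \in F -> r F = 0 by move=> wF; rewrite /r dy // subrr.
have [y' hy' dy'] := cycle_link_boundary t0 Hlink hr cr rw.
exists (fun F => y F + y' F) => [F H|G]; last by rewrite kdiffD dy' /r addrC subrK.
case: (boolP (y F == 0)) => yF; last exact: hy.
by apply: hy'; apply: contraNneq H => ->; rewrite (eqP yF) add0r.
Qed.

End DeletionLink.

Lemma acyclic_vertex_cover (A S : {set V}) (m : nat) s t :
  A \subset S -> {in S &, forall x y, e x y -> (x \in A) || (y \in A)} ->
  (forall X, X \subset A -> indep X -> (#|X| <= m)%N) ->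
  sign_sq s -> sign_anti S s -> (m < t)%N -> acyclic_at S set0 s t.
Proof.
have [N] := ubnP #|A|; elim: N A S m s t => // N IH A S m s t cA AS cover bound ss As mt.
case: (set_0Vmem A) => [A0|[a aA]].
  case: (set_0Vmem S) => [->|[w wS]].
    by apply: acyclic_gt_card; rewrite cards0 (leq_ltn_trans _ mt).
  apply: (acyclic_cone (w := w) ss As (sub0set _) wS); right => x xS.
  by apply/negP => /(cover w x wS xS); rewrite A0 !inE.
have aS := subsetP AS a aA.
have m_gt0 : (0 < m)%N.
  rewrite -(cards1 a); apply: bound; first by rewrite sub1set.
  by apply/indepP => x y; rewrite !inE => /eqP -> /eqP ->; rewrite eirr.
apply: (acyclic_split As aS (leq_ltn_trans (leq0n _) mt)).
  apply: (IH (A :\ a) _ m) => //.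
  - by move: cA; rewrite (cardsD1 a) aA add1n ltnS.
  - by apply/subsetP => x; rewrite !inE => /andP[-> /(subsetP AS)].
  - move=> x y; rewrite !inE => /andP[xa xS] /andP[ya yS] exy.
    by move: (cover x y xS yS exy); rewrite xa ya.
  - by move=> X XA; apply: bound; apply: subset_trans XA (subD1set _ _).
  - exact: sign_anti_setU1.
set L := S :\: (a |: [set x in S | e a x]).
have LS : L \subset S := subsetDl _ _.
have aL : a \notin L := link_notin S a.
apply: (IH (A :&: L) _ m.-1) => //.
- have : A :&: L \proper A.
    by apply/properP; split; [exact: subsetIl | exists a; rewrite // in_setI (negbTE aL) andbF].
  by move/proper_card; move: cA; lia.
- exact: subsetIr.
- move=> x y xL yL exy; rewrite !in_setI xL yL !andbT.
  exact: cover (subsetP LS x xL) (subsetP LS y yL) exy.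
- move=> X XA iX; rewrite -ltnS prednK //.
  have XL : X \subset L := subset_trans XA (subsetIr _ _).
  have aX : a \notin X by apply: contra aL; apply: (subsetP XL).
  have -> : #|X|.+1 = #|a |: X| by rewrite cardsU1 aX.
  apply: bound; first by rewrite subUset sub1set aA (subset_trans XA (subsetIl _ _)).
  by apply: indepU1 => // x /(subsetP XL); apply: link_nonadj.
- exact: sign_anti_link.
- by move: mt m_gt0; lia.
Qed.

Lemma gap_free_link_cover (L : {set V}) w u : gap_free e -> e w u ->
  w \notin L -> {in L, forall x, ~~ e w x} ->
  {in L &, forall x y, e x y -> e u x || e u y}.
Proof.
move=> gf ewu wL nadj x y xL yL exy.
have neq z : z \in L -> (w != z) && (u != z).
  move=> zL; apply/andP; split; first by apply: contraNneq wL => ->.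
  by apply: contraTneq ewu => ->; apply: nadj.
case/andP: (neq x xL) => wx ux; case/andP: (neq y yL) => wy uy.
have := gf w u x y ewu exy wx wy ux uy.
by rewrite (negbTE (nadj x xL)) (negbTE (nadj y yL)).
Qed.

(* n-claw-freeness at u: n - 1 independent neighbours of u in the link of w,
   together with w, would form an induced n-claw. *)
Lemma claw_free_link_indep n (L X : {set V}) w u : (0 < n)%N -> claw_free e n -> e w u ->
  w \notin L -> {in L, forall x, ~~ e w x} ->
  X \subset L :&: [set x | e u x] -> indep X -> (#|X| <= n.-2)%N.
Proof.
move=> n0 cf ewu wL nadj XA iX; rewrite leqNgt; apply/negP => X_big.
have [Y YX cY] : exists2 Y : {set V}, Y \subset X & #|Y| = n.-1.
  by apply: exists_subset_card; move: X_big n0; lia.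
have YA := subset_trans YX XA.
have YL : Y \subset L := subset_trans YA (subsetIl _ _).
have wY : w \notin Y by apply: contra wL; apply: (subsetP YL).
apply: cf; exists u, (w |: Y); split.
- by rewrite cardsU1 wY cY add1n prednK.
- move=> x; case/setU1P => [->|xY]; first by rewrite eS.
  by move: (subsetP YA x xY); rewrite !inE => /andP[_].
- move=> x y; case/setU1P => [->|xY]; case/setU1P => [->|yY].
  + by rewrite eirr.
  + exact/nadj/(subsetP YL).
  + by rewrite eS; exact/nadj/(subsetP YL).
  + by move/indepP: (indepS YX iX); apply.
Qed.

Lemma acyclic_gap_claw_free n S s t : (0 < n)%N -> gap_free e -> claw_free e n ->
  sign_sq s -> sign_anti S s -> (n <= t)%N -> acyclic_at S set0 s t.
Proof.
move=> n0 gf cf; have [N] := ubnP #|S|; elim: N S s t => // N IH S s t cS ss As nt.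
have t0 : (0 < t)%N := leq_trans n0 nt.
have [/exists_inP[w wS /forall_inP nadj]|] :=
  boolP [exists w in S, [forall x in S, ~~ e w x]].
  by apply: (acyclic_cone (w := w) ss As (sub0set _) wS); right.
rewrite negb_exists_in => /forall_inP noiso.
have [S0|[w wS]] := set_0Vmem S; first by apply: acyclic_gt_card; rewrite S0 cards0.
have := noiso w wS; rewrite negb_forall_in => /exists_inP[u uS /negPn ewu].
have n_gt1 : (1 < n)%N.
  rewrite ltn_neqAle n0 andbT; apply/negP => /eqP n1; apply: cf.
  exists u, [set w]; split; first by rewrite cards1.
    by move=> x; rewrite inE => /eqP ->; rewrite eS.
  by move=> x y; rewrite !inE => /eqP -> /eqP ->; rewrite eirr.
apply: (acyclic_split As wS t0).
  apply: (IH (S :\ w)) => //; last exact: sign_anti_setU1.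
  by move: cS; rewrite (cardsD1 w) wS add1n ltnS.
set L := S :\: (w |: [set x in S | e w x]).
have wL : w \notin L := link_notin S w.
apply: (acyclic_vertex_cover (A := L :&: [set x | e u x]) (m := n.-2)).
- exact: subsetIl.
- move=> x y xL yL exy; rewrite !in_setI xL yL !inE.
  exact: gap_free_link_cover wL (@link_nonadj S w) x y xL yL exy.
- by move=> X; apply: claw_free_link_indep wL (@link_nonadj S w).
- by [].
- exact: sign_anti_link.
- by move: n_gt1 nt; lia.
Qed.

End IndependenceComplex.

Section KoszulStrands.
Variables (k : fieldType) (V : finType) (e : rel V).
Implicit Types (F G : {set V}) (l m : V).

Definition wsign l F : k := (-1) ^+ #|[set v in F | (enum_rank v < enum_rank l)%N]|.

Lemma wsign_sq : sign_sq wsign.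
Proof. by move=> l F; rewrite /wsign -expr2 sqrr_sign. Qed.

Lemma card_rank_lt_D1 F l m : l \in F -> l != m ->
  #|[set v in F | (enum_rank v < enum_rank m)%N]| =
  ((enum_rank l < enum_rank m)%N + #|[set v in F :\ l | (enum_rank v < enum_rank m)%N]|)%N.
Proof.
move=> lF lm; rewrite [LHS](cardsD1 l) !inE lF /=; congr (_ + _)%N.
by apply: eq_card => x; rewrite !inE; case: (x == l).
Qed.

Lemma wsign_anti S : sign_anti S wsign.
Proof.
move=> l m F _ lF mF lm; rewrite /wsign.
have ml : m != l by rewrite eq_sym.
rewrite (card_rank_lt_D1 lF lm) (card_rank_lt_D1 mF ml) !exprD.
case: (ltngtP (enum_rank l) (enum_rank m)) => H /=.
- by rewrite expr0 expr1; ring.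
- by rewrite expr0 expr1; ring.
- by move/val_inj/enum_rank_inj: H => H; rewrite H eqxx in lm.
Qed.

Variable j : nat.
Local Notation P := ({set V} * {ffun V -> 'I_j.+1})%type.

Definition multideg (p : P) : {ffun V -> 'I_j.+2} := [ffun v => inord ((v \in p.1) + p.2 v)].

Lemma multidegE (p : P) v : (multideg p v : nat) = ((v \in p.1) + p.2 v)%N.
Proof.
rewrite ffunE inordK // ltnS; have := ltn_ord (p.2 v).
by case: (v \in p.1) => /=; rewrite ?add1n ?add0n // => /ltnW.
Qed.

Lemma kbasis_multideg_sum i (p : P) : kbasis e i p -> (\sum_v (multideg p v : nat))%N = j.
Proof.
case/and3P => _ /eqP E _; apply: etrans E.
rewrite /mdeg -sum1_card [X in (X + _)%N]big_mkcond /= -big_split /=.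
by apply: eq_bigr => v _; rewrite multidegE.
Qed.

Lemma kcoef_neq0 i (p q : P) : kcoef k e i p q != 0 ->
  [/\ kbasis e i p, std_mon e q.2 & exists l, [/\ l \in p.1, q.1 = p.1 :\ l,
      (q.2 l : nat) = (p.2 l).+1 & forall v, v != l -> (q.2 v : nat) = p.2 v]].
Proof.
rewrite /kcoef; case: ifP => [/andP[kb st]|]; last by rewrite eqxx.
case: pickP => [l|]; last by rewrite eqxx.
move=> /andP[lF /andP[/andP[/eqP E1 /eqP E2] /forallP E3]] _; split=> //.
by exists l; split=> // v vl; apply/eqP; move: (E3 v); rewrite vl.
Qed.

Lemma kcoef_multideg i (p q : P) : kcoef k e i p q != 0 -> multideg p = multideg q.
Proof.
case/kcoef_neq0 => _ _ [l [lF E1 E2 E3]].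
apply/ffunP => v; apply: val_inj; rewrite /= !multidegE E1 !inE.
case: (v =P l) => [->|/eqP vl] /=; first by rewrite lF E2 add1n.
by rewrite E3.
Qed.

Section MultidegreeStrand.
Variable a : {ffun V -> 'I_j.+2}.
Hypothesis a_le : forall v, (a v <= j)%N.

Definition msupp := [set v | (0 < a v)%N].
Definition msupp2 := [set v | (1 < a v)%N].

Lemma msupp2_sub : msupp2 \subset msupp.
Proof. by apply/subsetP => v; rewrite !inE => /ltnW. Qed.

Definition kelem F : P := (F, [ffun v => inord ((a v : nat) - (v \in F))]).

Lemma kelemE F v : ((kelem F).2 v : nat) = ((a v : nat) - (v \in F))%N.
Proof. by rewrite ffunE inordK // ltnS (leq_trans (leq_subr _ _) (a_le v)). Qed.

Lemma kelem_of_multideg (p : P) : multideg p = a -> p = kelem p.1.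
Proof.
case: p => F u /= pa; congr pair; apply/ffunP => v; apply: val_inj.
by rewrite /= kelemE /= -pa multidegE /= addKn.
Qed.

Lemma multideg_supp (p : P) : multideg p = a -> p.1 \subset msupp.
Proof. by move=> pa; apply/subsetP => v vF; rewrite inE -pa multidegE vF. Qed.

Lemma multideg_kelem F : F \subset msupp -> multideg (kelem F) = a.
Proof.
move=> FS; apply/ffunP => v; apply: val_inj; rewrite /= multidegE kelemE /=.
case vF: (v \in F); last by rewrite subn0.
by rewrite subnKC //; move: (subsetP FS v vF); rewrite inE.
Qed.

Lemma kelem_pos F v : F \subset msupp ->
  (0 < (kelem F).2 v)%N = (v \in (msupp :\: F) :|: msupp2).
Proof.
move=> FS; rewrite kelemE !inE; case: (v \in F) => /=; first by rewrite subn_gt0.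
by rewrite subn0 orbC; case: (a v : nat) => [|[|]].
Qed.

Lemma std_mon_kelem F : F \subset msupp -> std_mon e (kelem F).2 = admissible e msupp msupp2 F.
Proof.
move=> FS; rewrite /admissible FS; apply/idP/idP.
  move/forallP => H; apply/indepP => x y xX yX; move/forallP: (H x) => /(_ y).
  by rewrite !kelem_pos // xX yX !andbT.
move/indepP => H; apply/forallP => x; apply/forallP => y.
rewrite !kelem_pos //; case xX: (x \in _); case yX: (y \in _); rewrite ?andbF //=.
by rewrite andbT; apply: H.
Qed.

Lemma kbasis_kelem i F : F \subset msupp -> (\sum_v (a v : nat))%N = j ->
  kbasis e i (kelem F) = (#|F| == i) && admissible e msupp msupp2 F.
Proof.
move=> FS a_sum; rewrite /kbasis std_mon_kelem //=.
suff -> : (#|F| + mdeg (kelem F).2)%N = j by rewrite eqxx.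
apply: etrans a_sum; rewrite /mdeg -sum1_card big_mkcond /= -big_split /=.
apply: eq_bigr => v _; rewrite kelemE; case vF: (v \in F) => /=; last by rewrite subn0.
by rewrite subnKC //; move: (subsetP FS v vF); rewrite inE.
Qed.

Lemma kcoef_kelem i l G : l \in msupp -> l \notin G -> G \subset msupp ->
  kcoef k e i (kelem (l |: G)) (kelem G) =
  if kbasis e i (kelem (l |: G)) && std_mon e (kelem G).2 then wsign l (l |: G) else 0.
Proof.
move=> lS lG GS; rewrite /kcoef; case: ifP => // _.
case: pickP => [l' /andP[l'F /andP[/andP[/eqP E1 _] _]]|H] /=.
  suff -> : l' = l by [].
  apply/eqP; apply: contraNT lG => l'l.
  have l'G : l' \in G by move: l'F; rewrite !inE (negbTE l'l).
  by move: E1 l'G => /= ->; rewrite !inE eqxx.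
exfalso; move: (H l) => /negbT /negP; apply.
rewrite /= !inE eqxx /= setU1K // eqxx /=; apply/andP; split.
  rewrite !kelemE !inE eqxx /= (negbTE lG) subn0 subn1 prednK //.
  by move: lS; rewrite inE.
by apply/forallP => v; apply/implyP => vl; rewrite !ffunE !inE (negbTE vl).
Qed.

Lemma sum_kcoef_kelem i (f : P -> k) G : G \subset msupp ->
  (forall p, f p != 0 -> multideg p = a) ->
  \sum_p f p * kcoef k e i p (kelem G) =
  \sum_(l in msupp :\: G) f (kelem (l |: G)) *
     (if kbasis e i (kelem (l |: G)) && std_mon e (kelem G).2 then wsign l (l |: G) else 0).
Proof.
move=> GS fa.
rewrite (bigID (mem [set kelem (l |: G) | l in msupp :\: G])) /=.
rewrite [X in _ + X]big1 ?addr0; last first.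
  move=> p pI; case: (boolP (f p == 0)) => [/eqP->|fp]; first by rewrite mul0r.
  case: (boolP (kcoef k e i p (kelem G) == 0)) => [/eqP->|kp]; first by rewrite mulr0.
  exfalso; move/negP: pI; apply.
  have pa := fa p fp.
  case/kcoef_neq0: kp => _ _ [l [lF /= E1 _ _]].
  rewrite (kelem_of_multideg pa); apply/imsetP; exists l.
    by rewrite in_setD E1 in_setD1 eqxx /=; exact: (subsetP (multideg_supp pa)).
  by rewrite E1 setD1K.
rewrite big_imset /=; last first.
  move=> l l' lS l'S /(congr1 fst) /= E.
  move: (setU11 l G); rewrite E !inE => /orP[/eqP //|lG].
  by move: lS; rewrite inE lG.
by apply: eq_bigr => l; rewrite inE => /andP[lG lS]; rewrite kcoef_kelem.
Qed.

Lemma sum_kcoef_kdiff i (f : P -> k) (z : {set V} -> k) G :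
  (\sum_v (a v : nat))%N = j -> G \subset msupp ->
  (forall p, f p != 0 -> multideg p = a) ->
  (forall F, F \subset msupp -> f (kelem F) = z F) ->
  (forall F, F \subset msupp -> z F != 0 -> #|F| = i) ->
  \sum_p f p * kcoef k e i p (kelem G) = kdiff e msupp msupp2 wsign z G.
Proof.
move=> a_sum GS fa fz zcard; rewrite (sum_kcoef_kelem _ GS fa) /kdiff std_mon_kelem //.
case: ifP => vG; last by rewrite big1 // => l _; rewrite andbF mulr0.
apply: eq_bigr => l; rewrite inE => /andP[lG lS].
have lGS : l |: G \subset msupp by rewrite subUset sub1set lS GS.
rewrite andbT kbasis_kelem // admissibleU1 // andbT fz //.
case: (boolP (z (l |: G) == 0)) => [/eqP->|zl]; first by rewrite mul0r mulr0.
by rewrite (zcard _ lGS zl) eqxx mulrC.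
Qed.

Lemma koszul_strand_boundary i (X : P -> k) :
  (\sum_v (a v : nat))%N = j ->
  acyclic_at e msupp msupp2 wsign (#|msupp| - i) ->
  (forall p, X p != 0 -> kbasis e i p && (multideg p == a)) ->
  (forall q, \sum_p X p * kcoef k e i p q = 0) ->
  exists Y : P -> k, forall q, \sum_p Y p * kcoef k e i.+1 p q = X q.
Proof.
move=> a_sum Hacyc hX cX.
have Xa p : X p != 0 -> multideg p = a by move/hX => /andP[_ /eqP].
pose z F := X (kelem F).
have zcard F : F \subset msupp -> z F != 0 -> #|F| = i.
  by move=> FS /hX /andP[]; rewrite kbasis_kelem // => /andP[/eqP].
have hz : homog e msupp msupp2 (#|msupp| - i) z.
  move=> F zF; have FS : F \subset msupp := multideg_supp (Xa _ zF).
  move: zF => /hX /andP[]; rewrite kbasis_kelem // => /andP[/eqP cF vF] _.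
  by split=> //; rewrite cardsDS // cF.
have cz G : kdiff e msupp msupp2 wsign z G = 0.
  have [GS|GS] := boolP (G \subset msupp); last first.
    by rewrite /kdiff /admissible (negbTE GS).
  by rewrite -(sum_kcoef_kdiff a_sum GS Xa (fun _ _ => erefl) zcard) cX.
have [y hy dy] := Hacyc z hz cz.
pose Y p := if multideg p == a then y p.1 else 0.
have Ya p : Y p != 0 -> multideg p = a.
  by rewrite /Y; case: (multideg p =P a) => // _; rewrite eqxx.
have Yk F : F \subset msupp -> Y (kelem F) = y F.
  by move=> FS; rewrite /Y multideg_kelem // eqxx.
have ycard F : F \subset msupp -> y F != 0 -> #|F| = i.+1.
  move=> FS /hy[_]; rewrite cardsDS //; have := subset_leq_card FS; lia.
exists Y => q; have [/eqP qa|qa] := boolP (multideg q == a).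
  rewrite (kelem_of_multideg qa).
  by rewrite (sum_kcoef_kdiff a_sum (multideg_supp qa) Ya Yk ycard) dy.
rewrite big1 => [|p _]; last first.
  have [/eqP->|/Ya pa] := boolP (Y p == 0); first by rewrite mul0r.
  suff -> : kcoef k e i.+1 p q = 0 by rewrite mulr0.
  by apply/eqP; apply: contraNT qa => /kcoef_multideg <-; rewrite pa.
by apply/esym/eqP; apply: contraNT qa => /hX /andP[_ ->].
Qed.

End MultidegreeStrand.

Section CycleBoundary.
Variable i : nat.
Hypothesis strand_acyclic : forall a : {ffun V -> 'I_j.+2},
  (forall v, (a v <= j)%N) -> (\sum_v (a v : nat))%N = j ->
  acyclic_at e (msupp a) (msupp2 a) wsign (#|msupp a| - i).
Variable X : P -> k.
Hypotheses (X_basis : forall p, X p != 0 -> kbasis e i p)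
  (X_cycle : forall q, \sum_p X p * kcoef k e i p q = 0).

Lemma koszul_multideg_boundary a : exists Y : P -> k, forall q,
  \sum_p Y p * kcoef k e i.+1 p q = if multideg q == a then X q else 0.
Proof.
have [/existsP[p0 /andP[p0_basis /eqP p0a]]|none] :=
  boolP [exists p, kbasis e i p && (multideg p == a)]; last first.
  exists (fun _ => 0) => q; rewrite big1 => [|p _]; last by rewrite mul0r.
  case: ifP => // qa; apply/esym/eqP; apply: contraNT none => Xq.
  by apply/existsP; exists q; rewrite qa X_basis.
have a_sum : (\sum_v (a v : nat))%N = j by rewrite -p0a (kbasis_multideg_sum p0_basis).
have a_le v : (a v <= j)%N by rewrite -[X in (_ <= X)%N]a_sum (bigD1 v) //= leq_addr.
apply: (koszul_strand_boundary a_le a_sum (strand_acyclic a_le a_sum)) => [p|q].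
  by case: ifP => [pa /X_basis -> //|_]; rewrite eqxx.
have [qa|qa] := boolP (multideg q == a).
  rewrite -[RHS](X_cycle q); apply: eq_bigr => p _; case: (multideg p =P a) => // pa.
  have [/eqP->|/kcoef_multideg pq] := boolP (kcoef k e i p q == 0); first by rewrite !mulr0.
  by case: pa; rewrite pq; apply/eqP.
apply: big1 => p _; case: (multideg p =P a) => [pa|]; last by rewrite mul0r.
have [/eqP->|/kcoef_multideg pq] := boolP (kcoef k e i p q == 0); first by rewrite !mulr0.
by move: qa; rewrite -pq pa eqxx.
Qed.

Lemma koszul_cycle_boundary :
  exists Y : P -> k, forall q, \sum_p Y p * kcoef k e i.+1 p q = X q.
Proof.
have sum_boundary (s : seq {ffun V -> 'I_j.+2}) : exists Y : P -> k, forall q,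
    \sum_p Y p * kcoef k e i.+1 p q = \sum_(a <- s) (if multideg q == a then X q else 0).
  elim: s => [|a s [Y1 hY1]].
    by exists (fun _ => 0) => q; rewrite big_nil big1 // => p _; rewrite mul0r.
  have [Y2 hY2] := koszul_multideg_boundary a.
  exists (fun p => Y2 p + Y1 p) => q; rewrite big_cons -hY1 -hY2 -big_split /=.
  by apply: eq_bigr => p _; rewrite mulrDl.
have [Y hY] := sum_boundary (enum {: {ffun V -> 'I_j.+2}}).
exists Y => q; rewrite hY big_enum /= (bigD1 (multideg q)) //= eqxx big1 ?addr0 // => a.
by rewrite eq_sym => /negbTE ->.
Qed.

End CycleBoundary.

Lemma betti_quot_eq0_mx i :
  (forall x : 'rV[k]_#|{: P}|, (forall c, x 0 c != 0 -> kbasis e i (enum_val c)) ->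
     x *m kmx k e j i = 0 -> (x <= kmx k e j i.+1)%MS) ->
  betti_quot k e i j = 0%N.
Proof.
move=> Hx.
set A := [pred p : P | kbasis e i p].
set M := kmx k e j i; set B := kmx k e j i.+1.
pose S : 'M[k]_(#|A|, #|{: P}|) := \matrix_(r, c) ((enum_val r == enum_val c :> P)%:R).
have SS : S *m S^T = 1%:M.
  apply/matrixP => r r'; rewrite !mxE.
  rewrite (eq_bigr (fun c => ((enum_val c == enum_val r) && (enum_val c == enum_val r' :> P))%:R)); last first.
    by move=> c _; rewrite !mxE -natrM mulnb ![enum_val c == _]eq_sym.
  rewrite -(big_enum_val (A := {: P}) (fun p => ((p == enum_val r) && (p == enum_val r'))%:R)).
  rewrite (bigD1 (enum_val r)) //= eqxx /= big1 ?addr0; last by move=> p /negbTE ->.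
  by rewrite (inj_eq enum_val_inj) eq_sym.
have rS : \rank S = #|A|.
  apply/eqP; rewrite eqn_leq rank_leq_row /=.
  by rewrite -{1}(mxrank1 k #|A|) -SS mxrankM_maxl.
have sub : (S :&: kermx M <= B)%MS.
  apply/row_subP => r; set x := row r _.
  have : (x <= S :&: kermx M)%MS by apply: row_sub.
  rewrite sub_capmx => /andP[/submxP[y xy] /sub_kermxP xM].
  apply: Hx => // c xc.
  have : \sum_r0 y 0 r0 * S r0 c != 0 by move: xc; rewrite xy mxE.
  case/sumr_neq0_exists => r0 _; rewrite mxE.
  case: (enum_val r0 =P enum_val c) => [E _|_]; last by rewrite mulr0 eqxx.
  by rewrite -E; have := enum_valP r0.
have := mxrank_mul_ker S M; rewrite rS => H.
have H1 := mxrankM_maxr S M; have H2 := mxrankS sub.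
rewrite /betti_quot -/A -/M -/B; lia.
Qed.

Lemma sum_enum_val (F : P -> k) : \sum_p F p = \sum_(r < #|{: P}|) F (enum_val r).
Proof.
rewrite -(big_enum_val (A := {: P})).
by apply: eq_bigl => p; rewrite inE.
Qed.

Lemma betti_quot_eq0 i :
  (forall X : P -> k, (forall p, X p != 0 -> kbasis e i p) ->
     (forall q, \sum_p X p * kcoef k e i p q = 0) ->
     exists Y : P -> k, forall q, \sum_p Y p * kcoef k e i.+1 p q = X q) ->
  betti_quot k e i j = 0%N.
Proof.
move=> Hcyc; apply: betti_quot_eq0_mx => x x_basis x_cycle.
pose X (p : P) := x 0 (enum_rank p).
have [Y hY] : exists Y : P -> k, forall q, \sum_p Y p * kcoef k e i.+1 p q = X q.
  apply: Hcyc => [p /x_basis|q]; first by rewrite enum_rankK.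
  transitivity ((x *m kmx k e j i) 0 (enum_rank q)); last by rewrite x_cycle mxE.
  by rewrite mxE sum_enum_val; apply: eq_bigr => r _; rewrite !mxE enum_rankK /X enum_valK.
apply/submxP; exists (\row_r Y (enum_val r)); apply/rowP => c; rewrite !mxE.
transitivity (X (enum_val c)); first by rewrite /X enum_valK.
by rewrite -hY sum_enum_val; apply: eq_bigr => r _; rewrite !mxE.
Qed.

End KoszulStrands.

Lemma strand_acyclic_gap_claw_free (k : fieldType) (V : finType) (e : rel V) n i j
    (a : {ffun V -> 'I_j.+2}) :
  symmetric e -> irreflexive e -> (0 < n)%N -> gap_free e -> claw_free e n ->
  (n + i < j + 1)%N -> (\sum_v (a v : nat))%N = j ->
  acyclic_at e (msupp a) (msupp2 a) (@wsign k V) (#|msupp a| - i).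
Proof.
move=> eS eirr n0 gf cf nij a_sum.
have [R0|[w wR]] := set_0Vmem (msupp2 a); last first.
  apply: (acyclic_cone eS eirr (@wsign_sq k V) (@wsign_anti k V _) (msupp2_sub a)
           (subsetP (msupp2_sub a) w wR)).
  by left.
have card_supp : #|msupp a| = j.
  transitivity (\sum_v (a v : nat))%N; last exact: a_sum.
  rewrite -sum1_card big_mkcond /=; apply: eq_bigr => v _.
  have : v \notin msupp2 a by rewrite R0 inE.
  by rewrite !inE -leqNgt; case: (a v : nat) => [|[|]].
rewrite R0; apply: (acyclic_gap_claw_free eS eirr n0 gf cf (@wsign_sq k V) (@wsign_anti k V _)).
by rewrite card_supp; lia.
Qed.

Theorem theorem3p5 (k : fieldType) (V : finType) (e : rel V) (n : nat) :
  (0 < n)%N -> symmetric e -> irreflexive e ->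
  gap_free e -> claw_free e n ->
  reg_edge_ideal_le k e n.
Proof.
move=> n0 eS eirr gf cf i j _ betti_neq0.
rewrite leqNgt; apply/negP => nij; apply: betti_neq0.
apply: betti_quot_eq0 => X X_basis X_cycle.
apply: koszul_cycle_boundary X_basis X_cycle => a _ a_sum.
exact: (strand_acyclic_gap_claw_free (k := k) eS eirr n0 gf cf nij a_sum).
Qed.
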